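(* Let $n\ge 2$ and let $\mathsf{M}$ be a square submatrix of order $m$ of a matrix in $\mathscr{D}_n$. Then one of the following holds: (i) $|\det\mathsf{M}|\in\{0,1\}$; (ii) there exist an integer $m'\in[m]$ and a matrix $\mathsf{M}'\in\mathscr{D}_{m'}$ such that $|\det\mathsf{M}|=|\det\mathsf{M}'|$.
   Context: Let $e_1,\dots,e_n$ be the standard basis of $\mathbb{R}^n$ and $[\pm n]=\{-n,\dots,-1,1,\dots,n\}$. For $i\in[n-1]$ and $r\in[\pm n]$ with $i<|r|$, set $d(i,r)=e_i+\mathrm{sgn}(r)\,e_{|r|}\in\mathbb{R}^n$. $\mathscr{D}_n$ denotes the set of $n\times n$ real matrices each of whose rows is of the form $d(i,r)$ for some such $i,r$ (rows may repeat). A square submatrix is obtained by deleting some rows and the same number of columns. *)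

From HB Require Import structures.
From mathcomp Require Import all_boot all_order all_algebra.
Set Implicit Arguments. Unset Strict Implicit. Unset Printing Implicit Defensive.
Import Order.TTheory GRing.Theory Num.Theory.
Local Open Scope ring_scope.

(* d(i,r) = e_i + sgn(r) e_|r| with i < |r|, written 0-based:
   indices i < j in 'I_n, sign (-1)^s. *)
Definition drow (R : numDomainType) (n : nat) (i j : 'I_n) (s : bool) : 'rV[R]_n :=
  \row_k ((k == i)%:R + (-1) ^+ s * (k == j)%:R).

Definition is_drow (R : numDomainType) (n : nat) (v : 'rV[R]_n) : Prop :=
  exists (i j : 'I_n) (s : bool), (i < j)%N /\ v = drow R i j s.

Definition inD (R : numDomainType) (n : nat) (A : 'M[R]_n) : Prop :=
  forall k : 'I_n, is_drow (row k A).

(* square submatrix of order m: keep rows f and columns g (strictly increasing). *)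
Definition strict_incr (m n : nat) (f : 'I_m -> 'I_n) : Prop :=
  forall x y : 'I_m, (x < y)%N -> (f x < f y)%N.

From HB Require Import structures.
From mathcomp Require Import all_boot all_order all_algebra.
From mathcomp Require Import zify.
Import Order.TTheory GRing.Theory Num.Theory.
Local Open Scope ring_scope.

(* Let M = mxsub f g A with A in D_n and f, g strictly increasing.  Row i
   of M is the restriction to the columns g of the row d(p,q) of A.  If
   both p and q are columns of g, the restriction is again a row d(a,b)
   of the smaller size (g preserves order); otherwise it has at most one
   nonzero entry (lemma [colsub_drow_cases]).  Hence either every row of M
   is a d-row, i.e. M lies in D_m, or some row i of M vanishes outside a
   column c ([submatrix_inD_or_expand]).  In the latter case Laplace expansion along row i gives
   |det M| = |M i c| * |det M''| (lemma [det_row_vanishing_outside]), where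
   M'' is the order m-1 submatrix of A obtained by also deleting row f i
   and column g c ([minor_mxsub]); since every entry of A is 0 or +-1
   ([inD_entry_norm]), either det M = 0 or |det M| = |det M''| and we
   conclude by induction on m ([submatrix_det_reduction]). *)

Section StrictlyIncreasing.
Context {m n : nat} {g : 'I_m -> 'I_n}.
Hypothesis g_incr : strict_incr g.

Lemma strict_incr_ltn (x y : 'I_m) : (g x < g y)%N = (x < y)%N.
Proof.
case: (ltngtP x y) => [/g_incr -> // | /g_incr /ltnW | /val_inj -> ].
- by rewrite leqNgt => /negbTE.
- by rewrite ltnn.
Qed.

Lemma strict_incr_inj : injective g.
Proof.
move=> x y gxy; apply/val_inj.
by case: (ltngtP x y) => //; rewrite -strict_incr_ltn gxy ltnn.
Qed.

End StrictlyIncreasing.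

Lemma strict_incr_lift {m : nat} (i : 'I_m.+1) : strict_incr (lift i).
Proof. by move=> x y /= xy; rewrite /bump; case: leqP; case: leqP; lia. Qed.

Lemma strict_incr_comp {k m n : nat} {g : 'I_m -> 'I_n} {h : 'I_k -> 'I_m} :
  strict_incr g -> strict_incr h -> strict_incr (g \o h).
Proof. by move=> g_incr h_incr x y /h_incr /g_incr. Qed.

Lemma inD_entry_norm {R : numDomainType} {n : nat} {A : 'M[R]_n} (i j : 'I_n) :
  inD A -> `|A i j| = 0 \/ `|A i j| = 1.
Proof.
move=> /(_ i) [p [q [s [pq rowA]]]].
have -> : A i j = drow R p q s 0 j by rewrite -rowA mxE.
rewrite mxE; case: (eqVneq j p) => [jp | _]; case: (eqVneq j q) => [jq | _].
- by move: pq; rewrite -jp -jq ltnn.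
- by right; rewrite mulr0 addr0 normr1.
- by right; rewrite add0r mulr1 normrX normrN1 expr1n.
- by left; rewrite mulr0 addr0 normr0.
Qed.

Lemma colsub_drow_cases (R : numDomainType) {n m : nat} {g : 'I_m.+1 -> 'I_n}
    {p q : 'I_n} (s : bool) :
  strict_incr g -> (p < q)%N ->
  let v := colsub g (drow R p q s) in
  is_drow v \/ exists c, forall c', c' != c -> v 0 c' = 0.
Proof.
move=> g_incr pq v.
have g_eq := inj_eq (strict_incr_inj g_incr).
case: (pickP (fun a => g a == p)) => [a /eqP gap | no_p];
  case: (pickP (fun b => g b == q)) => [b /eqP gbq | no_q].
- left; exists a, b, s; split; first by rewrite -(strict_incr_ltn g_incr) gap gbq.
  by apply/rowP => c; rewrite !mxE -gap -gbq !g_eq.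
- right; exists a => c ca.
  by rewrite !mxE [g c == q]no_q mulr0 addr0 -gap g_eq (negbTE ca).
- right; exists b => c cb.
  by rewrite !mxE [g c == p]no_p add0r -gbq g_eq (negbTE cb) mulr0.
- right; exists ord0 => c _.
  by rewrite !mxE [g c == p]no_p [g c == q]no_q mulr0 addr0.
Qed.

Lemma det_row_vanishing_outside (R : comPzRingType) (m : nat) (M : 'M[R]_m)
    (i c : 'I_m) :
  (forall c', c' != c -> M i c' = 0) -> \det M = M i c * cofactor M i c.
Proof.
move=> Mi0; rewrite (expand_det_row _ i) (bigD1 c) //= big1 ?addr0 //.
by move=> c' /Mi0 ->; rewrite mul0r.
Qed.

Lemma norm_cofactor (R : numDomainType) (m : nat) (M : 'M[R]_m.+1) (i c : 'I_m.+1) :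
  `|cofactor M i c| = `|\det (row' i (col' c M))|.
Proof. by rewrite /cofactor normrM normrX normrN1 expr1n mul1r. Qed.

Lemma minor_mxsub (R : Type) (n m : nat) (A : 'M[R]_n) (f g : 'I_m.+1 -> 'I_n)
    (i c : 'I_m.+1) :
  row' i (col' c (mxsub f g A)) = mxsub (f \o lift i) (g \o lift c) A.
Proof. by apply/matrixP => x y; rewrite !mxE. Qed.

Lemma submatrix_inD_or_expand {R : numDomainType} {n m : nat} {A : 'M[R]_n}
    (f : 'I_m.+1 -> 'I_n) {g : 'I_m.+1 -> 'I_n} :
  inD A -> strict_incr g ->
  let M := mxsub f g A in
  inD M \/ exists i c, `|\det M| =
    `|A (f i) (g c)| * `|\det (mxsub (f \o lift i) (g \o lift c) A)|.
Proof.
move=> A_D g_incr M.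
case: (boolP [exists i, exists c, forall c', (c' != c) ==> (M i c' == 0)]).
- case/existsP=> i /existsP [c /forallP Mi0]; right; exists i, c.
  rewrite (@det_row_vanishing_outside _ _ _ i c) => [|c' c'c].
    by rewrite normrM norm_cofactor minor_mxsub mxE.
  exact/eqP/(implyP (Mi0 c')).
- move=> no_sparse_row; left => i.
  have [p [q [s [pq rowA]]]] := A_D (f i).
  have -> : row i M = colsub g (drow R p q s) by apply/rowP => c; rewrite -rowA !mxE.
  case: (colsub_drow_cases R s g_incr pq) => // [[c Mi0]].
  case/negP: no_sparse_row; apply/existsP; exists i; apply/existsP; exists c.
  apply/forallP => c'; apply/implyP => /Mi0 Mic'.
  by rewrite -Mic' -rowA !mxE.
Qed.

Lemma submatrix_det_reduction (R : numDomainType) (n m : nat) (A : 'M[R]_n)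
    (f g : 'I_m -> 'I_n) :
  inD A -> strict_incr f -> strict_incr g ->
  let M := mxsub f g A in
  (`|\det M| = 0 \/ `|\det M| = 1) \/
  (exists m' : nat, (1 <= m' <= m)%N /\
     exists M' : 'M[R]_m', inD M' /\ `|\det M| = `|\det M'|).
Proof.
move=> A_D; elim: m f g => [|m IH] f g f_incr g_incr M.
  by left; right; rewrite /M det_mx00 normr1.
have [M_D | [i [c detM]]] := submatrix_inD_or_expand f A_D g_incr.
  by right; exists m.+1; split; [lia | exists M].
have [Aij0 | Aij1] := inD_entry_norm (f i) (g c) A_D.
  by left; left; rewrite detM Aij0 mul0r.
rewrite Aij1 mul1r in detM; rewrite detM.
have [|[m' [m'm M'D]]] := IH _ _ (strict_incr_comp f_incr (strict_incr_lift i))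
                                  (strict_incr_comp g_incr (strict_incr_lift c)).
  by left.
by right; exists m'; split => //; lia.
Qed.

Theorem mainTheorem3 (R : realFieldType) (n m : nat) (A : 'M[R]_n)
    (f g : 'I_m -> 'I_n) :
  (2 <= n)%N -> inD A -> strict_incr f -> strict_incr g ->
  let M := mxsub f g A in
  (`|\det M| = 0 \/ `|\det M| = 1) \/
  (exists m' : nat, (1 <= m' <= m)%N /\
     exists M' : 'M[R]_m', inD M' /\ `|\det M| = `|\det M'|).
Proof. by move=> _; exact: submatrix_det_reduction. Qed.
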